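(* Let $\lambda_0,\lambda_1,\lambda_\infty$ be integers with $0<\lambda_x<p^N$ for $x\in\{0,1,\infty\}$ and $\lambda_0+\lambda_1+\lambda_\infty$ odd and $<2p^N$. Let $\phi:\mathbb P\to\mathbb P$ be a finite, separable, tamely ramified morphism that has ramification index $\lambda_x$ at $[x]$ for $x\in\{0,1,\infty\}$ and is étale elsewhere. Then $\phi([0]),\phi([1]),\phi([\infty])$ are pairwise distinct.
   Context: $p$ is a prime, $N\ge1$, $k$ an algebraically closed field of characteristic $p$, $\mathbb P=\mathbb P^1_k$, and $[0],[1],[\infty]\in\mathbb P(k)$ the points with coordinates $0,1,\infty$. *)

From mathcomp Require Import all_boot all_order all_algebra.
Set Implicit Arguments. Unset Strict Implicit. Unset Printing Implicit Defensive.
Import GRing.Theory.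
Local Open Scope ring_scope.

(* Points of P^1_k: [Some a] is the affine point with coordinate a,
   [None] is the point [infinity]. *)
Definition P1 (k : fieldType) := option k.

(* A morphism phi : P^1 -> P^1 of degree d >= 1 is given by a pair of coprime
   polynomials (g, h), phi = [G : H] where G, H are the degree-d
   homogenizations of g and h, d = max(deg g, deg h). *)
Section Morphism.
Variables (k : fieldType) (g h : {poly k}).

Definition mdeg : nat := (maxn (size g) (size h)).-1.

(* the morphism is well defined and finite (nonconstant) *)
Definition is_finite_morphism : Prop := coprimep g h /\ (1 <= mdeg)%N.

(* separable: the rational function g/h has nonzero derivative *)
Definition is_separable : Prop := g^`() * h - g * h^`() != 0.

Definition phi_at (P : P1 k) : P1 k :=
  match P with
  | Some a => if h.[a] != 0 then Some (g.[a] / h.[a]) else None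
  | None => if (size h < size g)%N then None else Some (g`_mdeg / h`_mdeg)
  end.

(* the dehomogenized fibre form: its zeros (with multiplicity, including
   multiplicity mdeg - deg at infinity) form the divisor phi^*(Q) *)
Definition fibre_poly (Q : P1 k) : {poly k} :=
  match Q with
  | Some c => g - c *: h
  | None => h
  end.

(* ramification index of phi at P: multiplicity of P in phi^*(phi(P)),
   i.e. the valuation at P of the pull-back of a uniformizer at phi(P). *)
Definition ram_index (P : P1 k) : nat :=
  match P with
  | Some a => mup a (fibre_poly (phi_at P))
  | None => (mdeg.+1 - size (fibre_poly (phi_at P)))%N
  end.

Definition is_tame (p : nat) : Prop := forall P : P1 k, ~~ (p %| ram_index P)%N.

End Morphism.

From mathcomp Require Import all_boot all_order all_algebra ring zify.
Set Implicit Arguments. Unset Strict Implicit. Unset Printing Implicit Defensive.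
Import GRing.Theory.
Local Open Scope ring_scope.

(* The Wronskian W = g'h - gh' of the pair (g, h) defining phi vanishes to
   order exactly e_a - 1 at every finite point a of tame index e_a, so tameness
   and etaleness away from [0], [1] give deg W = e_0 + e_1 - 2.  Suppose two of
   phi([0]), phi([1]), phi([infinity]) coincide; then phi([0]) and phi([1]) lie
   in {Q, R} with Q = phi([infinity]) and R <> Q.  The fibre forms F, H of Q and
   R satisfy W(F, H) = c W with c <> 0, and their degrees differ by the tame
   index e_infinity, whence deg W = deg F + deg H - 2.  But [0] and [1] are roots
   of F H of multiplicities at least e_0 and e_1, so deg F + deg H >= e_0 + e_1,
   a contradiction. *)

Section Wronskian.
Variable k : fieldType.
Implicit Types F G H : {poly k}.

Definition wronskian F H : {poly k} := F^`() * H - F * H^`().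

Lemma size_mulX_derivB F : (size ('X * F^`() - F *+ (size F).-1)%R <= (size F).-1)%N.
Proof.
apply/leq_sizeP => j hj; rewrite coefB coefXM coefMn.
case: j hj => [|j] hj /=.
  have -> : (size F).-1 = 0%N by lia.
  by rewrite mulr0n subr0.
rewrite coef_deriv.
have [<-|hc] : (j.+1 = (size F).-1 \/ (size F).-1 < j.+1)%N by lia.
  by rewrite subrr.
by rewrite nth_default ?mul0rn ?subr0 //; move: hc; case: (size F).
Qed.

Lemma size_wronskian F H : F != 0 -> H != 0 -> (size F)%:R != (size H)%:R :> k ->
  size (wronskian F H) = (size F + size H).-2.
Proof.
move=> Fn Hn hne.
set n := (size F).-1; set m := (size H).-1.
set A := 'X * F^`() - F *+ n; set B := 'X * H^`() - H *+ m.
have sA := size_mulX_derivB F; have sB := size_mulX_derivB H.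
rewrite -/n -/A in sA; rewrite -/m -/B in sB.
have hF : size F = n.+1 by rewrite /n; have := size_poly_gt0 F; rewrite Fn; lia.
have hH : size H = m.+1 by rewrite /m; have := size_poly_gt0 H; rewrite Hn; lia.
(* Euler's identity: X W(F, H) is (deg F - deg H) F H plus terms of lower degree. *)
have euler : 'X * wronskian F H = (n%:R - m%:R : k) *: (F * H) + (A * H - F * B).
  by rewrite /wronskian scalerBl !scaler_nat /A /B; ring.
have cn : (n%:R - m%:R : k) != 0.
  rewrite subr_eq0; apply: contra hne; rewrite hF hH => /eqP e.
  by rewrite -addn1 -(addn1 m) !natrD e.
have sFH : size (F * H) = (size F + size H).-1 by rewrite size_mul.
have lower : (size (A * H - F * B)%R < size (F * H)%R)%N.
  apply: leq_ltn_trans (size_polyD _ _) _; rewrite size_polyN sFH gtn_max.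
  have := size_polyMleq A H; have := size_polyMleq F B.
  rewrite hF hH; move: (size A) (size B) (size (A * H)) (size (F * B)) sA sB.
  by move=> *; apply/andP; split; lia.
have : size ('X * wronskian F H) = (size F + size H).-1.
  by rewrite euler size_polyDl size_scale // sFH.
have [->|Wn] := eqVneq (wronskian F H) 0.
  by rewrite mulr0 size_poly0 hF hH addnS.
by rewrite mulrC size_mulX // hF hH addnS /= => -[->].
Qed.

Lemma mup_wronskian F G H a e : F = G * ('X - a%:P) ^+ e -> ~~ root G a ->
  H.[a] != 0 -> e%:R != 0 :> k -> mup a (wronskian F H) = e.-1.
Proof.
move=> -> rG Ha; case: e => [|e]; first by rewrite eqxx.
move=> He /=; set X := 'X - a%:P.
set V := (G^`() * X + G *+ e.+1) * H - G * X * H^`().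
have -> : wronskian (G * X ^+ e.+1) H = V * X ^+ e.
  rewrite /wronskian derivM deriv_exp derivXsubC mul1r /= exprS -/X /V.
  clearbody X; move: (X ^+ e) (G^`()) (H^`()) => Y G' H'; ring.
rewrite mupMr ?mup_XsubCX ?eqxx // /root /V /X !hornerE subrr.
rewrite !(mulr0, mul0r, add0r, subr0) hornerMn -mulr_natr.
by rewrite !mulf_neq0.
Qed.

Lemma dvdp_XsubC_exp_mup2 (q : {poly k}) (a b : k) : q != 0 -> a != b ->
  ('X - a%:P) ^+ mup a q * ('X - b%:P) ^+ mup b q %| q.
Proof.
move=> qn ab; rewrite Gauss_dvdp; last first.
  by apply/coprimep_expl/coprimep_expr; rewrite coprimep_XsubC2 // subr_eq0 eq_sym.
by rewrite -(mup_geq a _ qn) -(mup_geq b _ qn) !leqnn.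
Qed.

Lemma mup_add_lt_size (q : {poly k}) a b : q != 0 -> a != b ->
  (mup a q + mup b q < size q)%N.
Proof.
move=> qn ab; have := dvdp_leq qn (dvdp_XsubC_exp_mup2 qn ab).
by rewrite size_mul ?expf_neq0 ?polyXsubC_eq0 // !size_exp_XsubC addSn addnS.
Qed.

End Wronskian.

Lemma size_poly_roots01 (k : closedFieldType) (W : {poly k}) : W != 0 ->
  (forall a, a != 0 -> a != 1 -> mup a W = 0%N) ->
  size W = (mup 0 W + mup 1 W).+1.
Proof.
move=> Wn mupW; set m0 := mup 0 W; set m1 := mup 1 W.
set D : {poly k} := ('X - 0%:P) ^+ m0 * ('X - 1%:P) ^+ m1.
have Dn : D != 0 by rewrite mulf_neq0 // expf_neq0 // polyXsubC_eq0.
have mupD a : mup a D = addn (if a == 0 then m0 else 0%N) (if a == 1 then m1 else 0%N).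
  by rewrite mupM ?expf_neq0 ?polyXsubC_eq0 // !mup_XsubCX !(eq_sym _ a).
have DW : D %| W by apply: dvdp_XsubC_exp_mup2; rewrite // eq_sym oner_neq0.
set U := W %/ D; have eW : W = U * D by rewrite divpK.
have Un : U != 0 by apply: contraNneq Wn => U0; rewrite eW U0 mul0r.
have noroot a : ~~ root U a.
  apply/negP => rU; have := mupM a Un Dn; rewrite -eW mupD.
  have : (0 < mup a U)%N by rewrite -XsubC_dvd // dvdp_XsubCl.
  have [-> | a0] := eqVneq a 0; first by rewrite -/m0; lia.
  have [-> | a1] := eqVneq a 1; first by rewrite -/m1; lia.
  by rewrite mupW //; lia.
have sU : size U = 1%N.
  by apply/eqP; apply: contraT => /closed_rootP [a]; rewrite (negPf (noroot a)).
have -> : size W = size (U * D) by rewrite -eW.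
rewrite size_mul // sU add1n /= size_mul ?expf_neq0 ?polyXsubC_eq0 //.
by rewrite !size_exp_XsubC addSn addnS.
Qed.

Lemma exists_other_point (T : eqType) (x0 : T) (P Q : option T) :
  exists R, R <> Q /\ (P = Q \/ P = R).
Proof.
have [->|/eqP PQ] := eqVneq P Q; last by exists P; split=> //; right.
by case: Q => [q|]; [exists None | exists (Some x0)]; split=> //; left.
Qed.

Section Morphism.
Variables (k : closedFieldType) (g h : {poly k}).
Hypothesis hfin : is_finite_morphism g h.

Local Notation d := (mdeg g h).
Local Notation fib := (fibre_poly g h).
Local Notation phi := (phi_at g h).
Local Notation ram := (ram_index g h).

Lemma maxn_size_mdeg : maxn (size g) (size h) = d.+1.
Proof. by case: hfin => _; rewrite /mdeg; case: (maxn _ _). Qed.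

Lemma fibre_poly_neq0 Q : fib Q != 0.
Proof.
case: hfin => cop hd; have hm := maxn_size_mdeg.
case: Q => [c|] /=; apply/eqP => e.
  have eg : g = c *: h by apply/eqP; rewrite -subr_eq0 e.
  have sh : size h = 1%N.
    have [c0|c0] := eqVneq c 0.
      by move: cop; rewrite eg c0 scale0r coprime0p => /eqp_size; rewrite size_poly1.
    by move: cop; rewrite eg coprimepZl // coprimepp => /eqP.
  have sg : (size g <= 1)%N.
    by rewrite eg; apply: leq_trans (size_scale_leq _ _) _; rewrite sh.
  by move: hd; rewrite /mdeg sh (maxn_idPr sg).
move: cop; rewrite e coprimep0 => /eqp_size; rewrite size_poly1 => sg.
by move: hd; rewrite /mdeg sg e size_poly0.
Qed.

Lemma size_fibre_poly_le Q : (size (fib Q) <= d.+1)%N.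
Proof.
rewrite -maxn_size_mdeg; case: Q => [c|] /=; last exact: leq_maxr.
apply: leq_trans (size_polyD _ _) _; rewrite size_polyN geq_max leq_maxl /=.
exact: leq_trans (size_scale_leq _ _) (leq_maxr _ _).
Qed.

Lemma size_fibre_poly R : R <> phi None -> size (fib R) = d.+1.
Proof.
move=> hR; apply/eqP; rewrite eqn_leq size_fibre_poly_le /=.
have hm := maxn_size_mdeg.
case: (leqP (size (fib R)) d) => // hs; exfalso.
move/leq_sizeP: hs => /(_ d (leqnn d)) hc.
move: hR; rewrite /phi_at.
case: R hc => [c|] /= hc; case: ltnP => hgh.
- have sg : size g = d.+1 by move: hm; rewrite (maxn_idPl (ltnW hgh)).
  have h0 : h`_d = 0 by apply: nth_default; move: hgh; rewrite sg.
  move: hc; rewrite coefB coefZ h0 mulr0 subr0 => hc.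
  have : lead_coef g == 0 by rewrite lead_coefE sg hc.
  by rewrite lead_coef_eq0 -size_poly_eq0 sg.
- have sh : size h = d.+1 by move: hm; rewrite (maxn_idPr hgh).
  have hd0 : h`_d != 0.
    have : lead_coef h != 0 by rewrite lead_coef_eq0 -size_poly_eq0 sh.
    by rewrite lead_coefE sh.
  move=> hne; apply: hne; congr Some.
  move: hc; rewrite coefB coefZ => /eqP; rewrite subr_eq0 => /eqP ->.
  by rewrite mulfK.
- by [].
- have sh : size h = d.+1 by move: hm; rewrite (maxn_idPr hgh).
  have : lead_coef h != 0 by rewrite lead_coef_eq0 -size_poly_eq0 sh.
  by rewrite lead_coefE sh /= hc eqxx.
Qed.

Lemma wronskian_fibre_poly Q R : Q <> R ->
  exists2 c : k, c != 0 & wronskian (fib Q) (fib R) = c *: wronskian g h.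
Proof.
rewrite /wronskian; case: Q => [c|]; case: R => [c'|] //= hne.
- exists (c - c'); first by rewrite subr_eq0; apply: contra_not_neq hne => ->.
  rewrite !derivB !derivZ -!mul_polyC polyCB.
  by move: (g^`()) (h^`()) => g' h'; ring.
- exists 1; first exact: oner_neq0.
  rewrite scale1r derivB derivZ -!mul_polyC.
  by move: (g^`()) (h^`()) => g' h'; ring.
- exists (-1); first by rewrite oppr_eq0 oner_neq0.
  rewrite derivB derivZ scaleN1r -!mul_polyC.
  by move: (g^`()) (h^`()) => g' h'; ring.
Qed.

Lemma exists_fibre_poly_nonroot a : exists2 R, R <> phi (Some a) & (fib R).[a] != 0.
Proof.
rewrite /phi_at; have [ha|ha] := boolP (h.[a] != 0); first by exists None.
exists (Some 0) => //=; rewrite scale0r subr0.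
move/negbNE: ha => ha.
by apply: coprimep_root ha; rewrite coprimep_sym; case: hfin.
Qed.

Lemma mup_wronskian_ram_index a : (ram (Some a))%:R != 0 :> k ->
  mup a (wronskian g h) = (ram (Some a)).-1.
Proof.
have [R Ra HRa] := exists_fibre_poly_nonroot a.
have [c c0 Wc] := wronskian_fibre_poly (nesym Ra).
rewrite /ram_index; set F := fib (phi (Some a)) in Wc *.
have [m [G]] := multiplicity_XsubC F a; rewrite fibre_poly_neq0 /= => rG EF.
have -> : mup a F = m by rewrite EF mupMr // mup_XsubCX eqxx.
move=> m0; rewrite -(mup_wronskian EF rG HRa m0) Wc -mul_polyC mupMr //.
by rewrite rootC.
Qed.

Lemma ram_index_le_mup a Q R : phi (Some a) = Q \/ phi (Some a) = R ->
  (ram (Some a) <= mup a (fib Q * fib R))%N.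
Proof.
rewrite mupM ?fibre_poly_neq0 //.
by case=> <-; [apply: leq_addr | apply: leq_addl].
Qed.

Section Tame.
Variable p : nat.
Hypotheses (hchar : p \in [pchar k]) (htame : is_tame g h p).
Hypothesis hsep : is_separable g h.
Hypothesis hetale : forall a : k, a != 0 -> a != 1 -> ram (Some a) = 1%N.

Lemma ram_index_neq0 P : (ram P)%:R != 0 :> k.
Proof. by rewrite -(dvdn_pcharf hchar); exact: htame. Qed.

Lemma ram_index_gt0 P : (0 < ram P)%N.
Proof. by rewrite lt0n; apply: contraNneq (ram_index_neq0 P) => ->. Qed.

Lemma size_wronskian_ram_index :
  size (wronskian g h) = ((ram (Some 0)).-1 + (ram (Some 1)).-1).+1.
Proof.
rewrite size_poly_roots01 // ?mup_wronskian_ram_index ?ram_index_neq0 //.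
by move=> a a0 a1; rewrite mup_wronskian_ram_index ?ram_index_neq0 // hetale.
Qed.

Lemma no_two_point_image R : R <> phi None ->
  phi (Some 0) = phi None \/ phi (Some 0) = R ->
  phi (Some 1) = phi None \/ phi (Some 1) = R -> False.
Proof.
move=> hR h0 h1; set Q := phi None in hR h0 h1.
have Fn := fibre_poly_neq0 Q; have Hn := fibre_poly_neq0 R.
set F := fib Q in Fn; set H := fib R in Hn.
have sH : size H = d.+1 := size_fibre_poly hR.
have sF : (size F + ram None)%N = d.+1.
  by have := size_fibre_poly_le Q; rewrite /ram_index -/Q -/F; lia.
have hne : (size F)%:R != (size H)%:R :> k.
  by rewrite sH -sF natrD -subr_eq0 opprD addrA subrr add0r oppr_eq0 ram_index_neq0.
have [c c0 Wc] := wronskian_fibre_poly (nesym hR).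
have sW : size (wronskian g h) = (size F + size H).-2.
  by rewrite -(size_scale _ c0) -Wc size_wronskian.
have n01 : (0 : k) != 1 by rewrite eq_sym oner_neq0.
have lt_size : (ram (Some 0%R) + ram (Some 1%R) < (size F + size H).-1)%N.
  rewrite -size_mul //; apply: leq_ltn_trans (mup_add_lt_size (mulf_neq0 Fn Hn) n01).
  exact: leq_add (ram_index_le_mup h0) (ram_index_le_mup h1).
move: sW lt_size; rewrite size_wronskian_ram_index.
have := ram_index_gt0 (Some 0); have := ram_index_gt0 (Some 1); lia.
Qed.

End Tame.
End Morphism.

Theorem mainTheorem16 (p N : nat) (k : closedFieldType)
  (hp : prime p) (hchar : p \in [pchar k]) (hN : (1 <= N)%N)
  (l0 l1 linf : nat)
  (hl0 : (0 < l0 < p ^ N)%N) (hl1 : (0 < l1 < p ^ N)%N)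
  (hlinf : (0 < linf < p ^ N)%N)
  (hodd : odd (l0 + l1 + linf)) (hsum : (l0 + l1 + linf < 2 * p ^ N)%N)
  (g h : {poly k})
  (hfin : is_finite_morphism g h) (hsep : is_separable g h)
  (htame : is_tame g h p)
  (hr0 : ram_index g h (Some 0) = l0)
  (hr1 : ram_index g h (Some 1) = l1)
  (hrinf : ram_index g h None = linf)
  (hetale : forall a : k, a != 0 -> a != 1 -> ram_index g h (Some a) = 1%N) :
  [/\ phi_at g h (Some 0) <> phi_at g h (Some 1),
      phi_at g h (Some 0) <> phi_at g h None
    & phi_at g h (Some 1) <> phi_at g h None].
Proof.
have NC := no_two_point_image hfin hchar htame hsep hetale.
set Q := phi_at g h None in NC *.
split=> E.
- have [R [RQ hR]] := exists_other_point 0 (phi_at g h (Some 0)) Q.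
  by apply: (NC R RQ hR); rewrite -E.
- have [R [RQ hR]] := exists_other_point 0 (phi_at g h (Some 1)) Q.
  exact: NC R RQ (or_introl E) hR.
- have [R [RQ hR]] := exists_other_point 0 (phi_at g h (Some 0)) Q.
  exact: NC R RQ hR (or_introl E).
Qed.
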